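(* Let $f:\mathbb{R}^d\to\mathbb{R}$ be differentiable and attain its minimum value $f^*$. Consider the iteration (scaled sign gradient descent) \[ x_{k+1}=x_k-\alpha\|g_k\|_1\operatorname{sign}(g_k),\qquad g_k:=\nabla f(x_k),\qquad k=0,1,2,\ldots, \] with constant learning rate $\alpha>0$ and arbitrary $x_0\in\mathbb{R}^d$. Suppose $f$ is $L$-smooth with respect to the $\ell_\infty$-norm, i.e. $\|\nabla f(x)-\nabla f(y)\|_1\le L\|x-y\|_\infty$ for all $x,y\in\mathbb{R}^d$, for some $L>0$. Then: \begin{enumerate} \item If in addition $f$ is $\mu$-strongly convex with respect to the $\ell_\infty$-norm for some $\mu>0$, i.e. $f(x)-f(y)\ge \nabla f(y)^\top(x-y)+\frac{\mu}{2}\|x-y\|_\infty^2$ for all $x,y$, and $0<\alpha<\frac{2}{L}$, then for all $k\ge 0$, \[ f(x_k)-f^*\le \zeta^k\,(f(x_0)-f^* ),\qquad \zeta:=1-2\mu\alpha\Big(1-\frac{L\alpha}{2}\Big)\in[0,1). \] \item If instead $f$ satisfies the Polyak–Łojasiewicz inequality $\|\nabla f(x)\|_1^2\ge 2\mu(f(x)-f^* )$ for all $x\in\mathbb{R}^d$, for some $\mu>0$, and $0<\alpha<\frac{2}{L}$, then the same bound $f(x_k)-f^*\le \zeta^k(f(x_0)-f^* )$ with the same $\zeta$ holds for all $k\ge0$. \item With only the $\ell_\infty$-smoothness assumption, for all $k\ge 0$, \[ \min_{l\in\{0,1,\ldots,k\}}\|g_l\|_1^2\le \frac{f(x_0)-f^*}{\gamma(k+1)},\qquad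 \gamma:=\alpha\Big(1-\frac{L\alpha}{2}\Big). \] \end{enumerate}
   Context: $\operatorname{sign}$ is applied componentwise; $\|\cdot\|_1$ and $\|\cdot\|_\infty$ denote the $\ell_1$- and $\ell_\infty$-norms on $\mathbb{R}^d$. *)

From HB Require Import structures.
From mathcomp Require Import all_boot all_order all_algebra.
From mathcomp Require Import all_classical all_reals all_analysis.
Set Implicit Arguments. Unset Strict Implicit. Unset Printing Implicit Defensive.
Import Order.TTheory GRing.Theory Num.Theory.
Import numFieldNormedType.Exports.
Local Open Scope ring_scope.

Section Defs.
Context {R : realType} {d : nat}.

Definition dotv (u v : 'rV[R]_d) : R := \sum_(i < d) u ord0 i * v ord0 i.
Definition norm1 (v : 'rV[R]_d) : R := \sum_(i < d) `|v ord0 i|.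
Definition norminf (v : 'rV[R]_d) : R := \big[Num.max/0]_(i < d) `|v ord0 i|.
Definition signv (v : 'rV[R]_d) : 'rV[R]_d := \row_(i < d) Num.sg (v ord0 i).

Definition is_gradient (f : 'rV[R]_d -> R) (g : 'rV[R]_d -> 'rV[R]_d) : Prop :=
  forall x, differentiable f x /\ forall v, ('d f x : 'rV[R]_d -> R) v = dotv (g x) v.
End Defs.

(* Smoothness in the l_inf norm gives the descent inequality
   f y <= f z + g(z)^T (y - z) + L/2 |y - z|_inf^2.  The sign step moves by at
   most alpha |g_k|_1 in l_inf and has g_k^T (x_{k+1} - x_k) = - alpha |g_k|_1^2,
   so each iteration lowers f by at least gamma |g_k|_1^2.  Under PL this is the
   contraction f(x_{k+1}) - fstar <= zeta (f(x_k) - fstar); l_inf-strong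
   convexity implies PL with the same mu, via Hoelder |u^T v| <= |u|_1 |v|_inf.
   Without either, the decreases telescope to
   gamma * sum_l |g_l|_1^2 <= f(x_0) - fstar. *)

From HB Require Import structures.
From mathcomp Require Import all_boot all_order all_algebra.
From mathcomp Require Import all_classical all_reals all_analysis.
From mathcomp Require Import lra.
Import Order.TTheory GRing.Theory Num.Theory.
Import numFieldNormedType.Exports.
Local Open Scope ring_scope.

Section HolderL1Linf.
Context {R : realType} {d : nat}.
Implicit Types (u v w : 'rV[R]_d) (c : R).

Lemma norm1_ge0 u : 0 <= norm1 u.
Proof. exact: sumr_ge0. Qed.

Lemma norminf_ge0 u : 0 <= norminf u.
Proof. by rewrite /norminf; elim/big_ind: _ => // a b a0 b0; rewrite le_max a0. Qed.

Lemma ler_coord_norminf u i : `|u ord0 i| <= norminf u.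
Proof. exact: (le_bigmax _ (fun i => `|u ord0 i|)). Qed.

Lemma norminfN u : norminf (- u) = norminf u.
Proof. by apply: eq_bigr => i _; rewrite mxE normrN. Qed.

Lemma norminfZ_le c u : 0 <= c -> norminf (c *: u) <= c * norminf u.
Proof.
move=> c0; apply: bigmax_le => [|i _]; first by rewrite mulr_ge0 ?norminf_ge0.
by rewrite mxE normrM ger0_norm // ler_wpM2l // ler_coord_norminf.
Qed.

Lemma norminf_signv_le1 u : norminf (signv u) <= 1.
Proof.
apply: bigmax_le => // i _; rewrite mxE.
by case: sgrP; rewrite ?normr0 ?normrN1 ?normr1.
Qed.

Lemma ler_norm_dotv u v : `|dotv u v| <= norm1 u * norminf v.
Proof.
rewrite /dotv /norm1 mulr_suml; apply: le_trans (ler_norm_sum _ _ _) _.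
by apply: ler_sum => i _; rewrite normrM ler_wpM2l // ler_coord_norminf.
Qed.

Lemma dotvBl u w v : dotv (u - w) v = dotv u v - dotv w v.
Proof. by rewrite /dotv -sumrB; apply: eq_bigr => i _; rewrite !mxE mulrBl. Qed.

Lemma dotvNZr c u v : dotv u (- (c *: v)) = - (c * dotv u v).
Proof.
rewrite /dotv mulr_sumr -sumrN; apply: eq_bigr => i _.
by rewrite !mxE mulrN mulrCA.
Qed.

Lemma dotv_signv u : dotv u (signv u) = norm1 u.
Proof. by apply: eq_bigr => i _; rewrite mxE normrEsg mulrC. Qed.

End HolderL1Linf.

Section LinfSmoothness.
Context {R : realType} {d : nat}.
Context {f : 'rV[R]_d -> R} {g : 'rV[R]_d -> 'rV[R]_d}.
Hypothesis fg : is_gradient f g.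

Lemma is_derive_along_line v z t :
  is_derive t (1 : R) (fun s : R => f (s *: v + z)) (dotv (g (t *: v + z)) v).
Proof.
have [df dfE] := fg (t *: v + z).
pose fv s := f (s *: v + z).
have quotE : (fun h : R => h^-1 *: ((fv \o shift t) (h *: 1) - fv t)) =
             (fun h : R => h^-1 *: ((f \o shift (t *: v + z)) (h *: v) - f (t *: v + z))).
  by apply/funext => h; rewrite /fv /= [h *: 1]mulr1 scalerDl addrA.
have der : derivable fv t 1 by rewrite /derivable quotE; exact: diff_derivable.
apply: DeriveDef => //; rewrite /derive quotE.
by rewrite -[RHS]dfE -deriveE.
Qed.

Context {L : R}.
Hypothesis L0 : 0 <= L.
Hypothesis gL : forall y z, norm1 (g y - g z) <= L * norminf (y - z).

(* Subtracting the quadratic (L/2) N^2 t^2 makes the restriction of f to the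
   segment nonincreasing; this is how the factor 1/2 appears. *)
Lemma linf_smooth_upper_bound y z :
  f y <= f z + dotv (g z) (y - z) + L / 2 * norminf (y - z) ^+ 2.
Proof.
set v := y - z; set A := dotv (g z) v; set N := norminf v.
pose c := L / 2 * N ^+ 2.
pose phi := (fun s : R => f (s *: v + z)) - A \*: (@id R) - c \*: (@id R) ^+ 2.
have dphi t : is_derive t (1 : R) phi
    (dotv (g (t *: v + z)) v - A *: 1 - c *: ((2%:R * t ^+ 1) *: 1)).
  by apply: is_deriveB; apply: is_deriveB => //; exact: is_derive_along_line.
have phi_nonincr (t : R) : t \in `]0, 1[ -> derive1 phi t <= 0.
  rewrite in_itv /= => /andP[t0 _]; rewrite derive1E (derive_val (is_derive := dphi t)).
  rewrite [A%:A]mulr1 [_%:A]mulr1 expr1 subr_le0 /A -dotvBl.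
  apply: le_trans (ler_norm _) _; apply: le_trans (ler_norm_dotv _ _) _.
  apply: le_trans (ler_wpM2r (norminf_ge0 _) (gL _ _)) _; rewrite addrK.
  apply: (@le_trans _ _ (L * (t * N) * N)).
    by rewrite ler_wpM2r ?norminf_ge0 // ler_wpM2l // norminfZ_le // ltW.
  by rewrite /c /GRing.scale /=; lra.
have : phi 1 <= phi 0.
  have phi_derivable (t : R) : derivable phi t 1 by exact: ex_derive.
  apply: (ler0_derive1_le_cc _ phi_nonincr); rewrite ?in_itv /= ?lexx ?ler01 //.
  exact: derivable_within_continuous.
have phiE s : phi s = f (s *: v + z) - A * s - c * (s * s) by [].
rewrite !phiE scale0r add0r scale1r subrK /c; lra.
Qed.

End LinfSmoothness.

Section Sequences.
Context {R : realType}.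

(* For [z < 0] the hypotheses force [a] to vanish identically. *)
Lemma geometric_decay (a : nat -> R) (z : R) :
  (forall k, 0 <= a k) -> (forall k, a k.+1 <= z * a k) ->
  forall k, a k <= z ^+ k * a 0.
Proof.
move=> a_ge0 a_step; have [z_ge0|z_lt0] := leP 0 z.
  elim=> [|k ih]; first by rewrite mul1r.
  by apply: le_trans (a_step k) _; rewrite exprS -mulrA ler_wpM2l.
have a0_eq0 : a 0 = 0.
  by have := a_step 0; have := a_ge0 1; have := a_ge0 0; nra.
suff a_eq0 k : a k = 0 by move=> k; rewrite !a_eq0 mulr0.
elim: k => // k ih; apply/eqP; rewrite eq_le a_ge0 andbT.
by rewrite -(mulr0 z) -ih a_step.
Qed.

Lemma sum_le_telescope (a b : nat -> R) n :
  (forall k, a k.+1 <= a k - b k) -> \sum_(l < n) b l <= a 0 - a n.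
Proof.
move=> ab; elim: n => [|n ih]; first by rewrite big_ord0 subrr.
by rewrite big_ord_recr /=; have := ab n; lra.
Qed.

Lemma bigmin_le_mean (F : nat -> R) (m : R) n :
  \big[Num.min/m]_(l < n) F l * n%:R <= \sum_(l < n) F l.
Proof.
rewrite mulr_natr -[in X in _ *+ X](card_ord n) -sumr_const.
by apply: ler_sum => l _; exact: bigmin_le.
Qed.

End Sequences.

Lemma linf_strongly_convex_PL {R : realType} {d : nat}
    {f : 'rV[R]_d -> R} {g : 'rV[R]_d -> 'rV[R]_d} {mu : R} :
  0 < mu ->
  (forall y z, f y - f z >= dotv (g z) (y - z) + mu / 2 * norminf (y - z) ^+ 2) ->
  forall y z, 2 * mu * (f y - f z) <= norm1 (g y) ^+ 2.
Proof.
move=> mu0 sc y z; have := sc z y; have := ler_norm_dotv (g y) (z - y).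
set N := norminf _; set n1 := norm1 _; rewrite ler_norml => /andP[dot_ge _].
(* minimise [- n1 N + mu/2 N^2] over [N] *)
have := sqr_ge0 (n1 - mu * N); nra.
Qed.

Section SignGradientDescent.
Context {R : realType} {d : nat}.
Context {f : 'rV[R]_d -> R} {grad : 'rV[R]_d -> 'rV[R]_d} {L alpha : R}.
Context {x : nat -> 'rV[R]_d}.
Hypothesis fgrad : is_gradient f grad.
Hypothesis L_ge0 : 0 <= L.
Hypothesis grad_lipschitz : forall y z, norm1 (grad y - grad z) <= L * norminf (y - z).
Hypothesis alpha_ge0 : 0 <= alpha.
Hypothesis x_step :
  forall k, x k.+1 = x k - (alpha * norm1 (grad (x k))) *: signv (grad (x k)).

Let gamma := alpha * (1 - L * alpha / 2).

Lemma sign_gd_decrease k :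
  f (x k.+1) <= f (x k) - gamma * norm1 (grad (x k)) ^+ 2.
Proof.
set g := grad (x k); set n1 := norm1 g.
have dx : x k.+1 - x k = - ((alpha * n1) *: signv g).
  by rewrite x_step addrAC subrr add0r.
have := linf_smooth_upper_bound fgrad L_ge0 grad_lipschitz (x k.+1) (x k).
rewrite dx dotvNZr dotv_signv norminfN -/g -/n1.
have n1_ge0 : 0 <= n1 by exact: norm1_ge0.
have step_le : norminf ((alpha * n1) *: signv g) <= alpha * n1.
  apply: le_trans (norminfZ_le _ _ (mulr_ge0 alpha_ge0 n1_ge0)) _.
  by rewrite ler_piMr ?norminf_signv_le1 // mulr_ge0.
have step_sq_le : L / 2 * norminf ((alpha * n1) *: signv g) ^+ 2 <= L / 2 * (alpha * n1) ^+ 2.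
  apply: ler_wpM2l; first by rewrite divr_ge0.
  by rewrite ler_sqr ?nnegrE ?norminf_ge0 ?mulr_ge0.
rewrite /gamma; nra.
Qed.

Context {fstar : R}.
Hypothesis fstar_le : forall y, fstar <= f y.

Lemma sign_gd_PL_rate mu : L * alpha <= 2 ->
  (forall y, 2 * mu * (f y - fstar) <= norm1 (grad y) ^+ 2) ->
  forall k, f (x k) - fstar <= (1 - 2 * mu * gamma) ^+ k * (f (x 0%N) - fstar).
Proof.
move=> alpha_le PL; apply: geometric_decay => [k|k]; first by rewrite subr_ge0.
have gamma_ge0 : 0 <= gamma by rewrite /gamma mulr_ge0 // subr_ge0 ler_pdivrMr // mul1r.
have := sign_gd_decrease k; have := ler_wpM2l gamma_ge0 (PL (x k)); nra.
Qed.

Lemma sign_gd_min_grad_rate k : 0 < alpha -> L * alpha < 2 ->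
  \big[Num.min/norm1 (grad (x 0%N)) ^+ 2]_(l < k.+1) norm1 (grad (x l)) ^+ 2
    <= (f (x 0%N) - fstar) / (gamma * k.+1%:R).
Proof.
move=> alpha_gt0 alpha_lt.
have gamma_gt0 : 0 < gamma.
  by apply: mulr_gt0 => //; rewrite subr_gt0 ltr_pdivrMr // mul1r.
rewrite ler_pdivlMr; last by rewrite mulr_gt0 ?ltr0Sn.
have := bigmin_le_mean (fun l => norm1 (grad (x l)) ^+ 2) (norm1 (grad (x 0%N)) ^+ 2) k.+1.
move=> /(ler_wpM2l (ltW gamma_gt0)); rewrite mulr_sumr.
have := sum_le_telescope (fun l => f (x l)) _ k.+1 sign_gd_decrease.
have := fstar_le (x k.+1); lra.
Qed.

End SignGradientDescent.

Theorem theorem1 (R : realType) (d : nat)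
  (f : 'rV[R]_d -> R) (grad : 'rV[R]_d -> 'rV[R]_d) (fstar : R)
  (L alpha : R) (x : nat -> 'rV[R]_d) :
  is_gradient f grad ->
  (exists xstar, f xstar = fstar /\ forall y, fstar <= f y) ->
  0 < alpha ->
  (forall k, x k.+1 = x k - (alpha * norm1 (grad (x k))) *: signv (grad (x k))) ->
  0 < L ->
  (forall y z, norm1 (grad y - grad z) <= L * norminf (y - z)) ->
  let zeta mu := 1 - 2 * mu * alpha * (1 - L * alpha / 2) in
  let gamma := alpha * (1 - L * alpha / 2) in
  (* 1. strong convexity w.r.t. the l_infinity norm *)
  (forall mu : R, 0 < mu ->
     (forall y z, f y - f z >= dotv (grad z) (y - z) + mu / 2 * norminf (y - z) ^+ 2) ->
     alpha < 2 / L ->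
     forall k, f (x k) - fstar <= zeta mu ^+ k * (f (x 0%N) - fstar))
  /\
  (* 2. Polyak-Lojasiewicz inequality in the l1 norm *)
  (forall mu : R, 0 < mu ->
     (forall y, norm1 (grad y) ^+ 2 >= 2 * mu * (f y - fstar)) ->
     alpha < 2 / L ->
     forall k, f (x k) - fstar <= zeta mu ^+ k * (f (x 0%N) - fstar))
  /\
  (* 3. smoothness only *)
  (alpha < 2 / L ->
     forall k,
       \big[Num.min/norm1 (grad (x 0%N)) ^+ 2]_(l < k.+1) norm1 (grad (x l)) ^+ 2
       <= (f (x 0%N) - fstar) / (gamma * k.+1%:R)).
Proof.
move=> fgrad [xstar [<- f_min]] alpha_gt0 x_step L_gt0 grad_lipschitz zeta gamma.
have step_bound : alpha < 2 / L -> L * alpha < 2 by rewrite ltr_pdivlMr // mulrC.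
have PL_rate mu : (forall y, 2 * mu * (f y - f xstar) <= norm1 (grad y) ^+ 2) ->
    alpha < 2 / L -> forall k, f (x k) - f xstar <= zeta mu ^+ k * (f (x 0%N) - f xstar).
  move=> PL /step_bound /ltW alpha_le k; rewrite /zeta -mulrA.
  exact: (sign_gd_PL_rate fgrad (ltW L_gt0) grad_lipschitz (ltW alpha_gt0) x_step f_min).
split; [|split].
- move=> mu mu_gt0 strongly_convex; apply: PL_rate => y.
  exact: (linf_strongly_convex_PL mu_gt0 strongly_convex).
- by move=> mu _; exact: PL_rate.
- move=> /step_bound alpha_lt k.
  exact: (sign_gd_min_grad_rate fgrad (ltW L_gt0) grad_lipschitz (ltW alpha_gt0) x_step f_min).
Qed.
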